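(* Let $\star$ be a continuous and sup-continuous triangle function such that the group of invertible elements of $(\Delta^+,\star)$ is trivial, i.e. $\mathcal U(\Delta^+)=\{\mathcal H_0\}$. Let $(G,\cdot,D,\star)$ and $(G',\cdot,D',\star)$ be two complete invariant probabilistic metric groups. Then the following are equivalent: (1) there is a group isomorphism $\mathcal I:G\to G'$ with $D'(\mathcal I(x),\mathcal I(y))=D(x,y)$ for all $x,y\in G$; (2) there is a monoid isomorphism $\Phi:(Lip^1_\star(G,\Delta^+),\odot)\to(Lip^1_\star(G',\Delta^+),\odot)$ with $\overline{\mathbb D}'(\Phi(f),\Phi(g))=\overline{\mathbb D}(f,g)$ for all $f,g\in Lip^1_\star(G,\Delta^+)$ (where $\overline{\mathbb D}$, $\overline{\mathbb D}'$ are the metrics defined below for $G$ and $G'$ respectively).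
   Context: A distribution function is a nondecreasing, left-continuous function $F:[-\infty,+\infty]\to[0,1]$ with $F(-\infty)=0$, $F(+\infty)=1$; $\Delta^+$ is the set of distribution functions with $F(0)=0$, ordered pointwise (a complete lattice with maximum $\mathcal H_0$ and minimum $\mathcal H_\infty$, where $\mathcal H_0(t)=0$ for $t\le0$, $1$ for $t>0$, and $\mathcal H_\infty(t)=0$ for $t<+\infty$, $\mathcal H_\infty(+\infty)=1$). A triangle function is a binary operation $\star$ on $\Delta^+$ that is commutative, associative, nondecreasing in each argument, with $F\star\mathcal H_0=F$; $\mathcal U(\Delta^+)$ is the group of invertible elements of the monoid $(\Delta^+,\star)$. $\star$ is sup-continuous if $\sup_i(F_i\star L)=(\sup_iF_i)\star L$ for every nonempty family $(F_i)$ and every $L$. $F_n\xrightarrow{w}F$ means $F_n(t)\to F(t)$ at every continuity point $t\in\mathbb R$ of $F$; $\star$ is continuous if $F_n\star L_n\xrightarrow{w}F\star L$ whenever $F_n\xrightarrow{w}F$, $L_n\xrightarrow{w}L$. A probabilistic metric space $(G,D,\star)$ consists of a set $G$, a triangle function $\star$ and $D:G\times G\to\Delta^+$ with (i) $D(p,q)=\mathcal H_0$ iff $p=q$; (ii) $D(p,q)=D(q,p)$; (iii) $D(p,q)\star D(q,r)\le D(p,r)$. If $(G,\cdot)$ is a group and $D(pr,qr)=D(rp,rq)=D(p,q)$ for all $p,q,r$, it is an invariant probabilistic metric group. A sequence $(z_n)$ is Cauchy if $D(z_n,z_p)\xrightarrow{w}\mathcal H_0$ as $n,p\to\infty$; completeness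 means every Cauchy sequence has a point $z$ with $D(z_n,z)\xrightarrow{w}\mathcal H_0$. $Lip^1_\star(G,\Delta^+)$ is the set of maps $f:G\to\Delta^+$ with $D(x,y)\star f(y)\le f(x)$ for all $x,y$. For maps $f,g:G\to\Delta^+$, $(f\odot g)(x)=\sup_{y,z\in G,\ yz=x}f(y)\star g(z)$. $\Pi(G)$ is the set of $f\in Lip^1_\star(G,\Delta^+)$ for which there is a Cauchy sequence $(a_n)\subset G$ with $D(a_n,x)\xrightarrow{w}f(x)$ for all $x$. $\mathbb D(f,g)=\sup_{x\in G}f(x)\star g(x)$ for $f,g\in\Pi(G)$. $\overline{\mathbb D}$ on $Lip^1_\star(G,\Delta^+)$ is: $\overline{\mathbb D}(f,g)=\mathbb D(f,g)$ if $f,g\in\Pi(G)$; $\overline{\mathbb D}(f,g)=\mathcal H_0$ if $f=g$; $\overline{\mathbb D}(f,g)=\mathcal H_\infty$ if $f\ne g$ and $(f,g)\notin\Pi(G)\times\Pi(G)$. *)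

From Stdlib Require Import Reals Lra Classical ClassicalEpsilon.
Open Scope R_scope.

Inductive ER : Type := NInf | Fin (r : R) | PInf.

Definition is_dplus (F : ER -> R) : Prop :=
  F NInf = 0 /\ F PInf = 1 /\ F (Fin 0) = 0 /\
  (forall x, 0 <= F x <= 1) /\
  (forall r s, r <= s -> F (Fin r) <= F (Fin s)) /\
  (forall t eps, 0 < eps -> exists d, 0 < d /\
      forall s, t - d < s < t -> F (Fin t) - F (Fin s) < eps).

Definition Dplus : Type := { F : ER -> R | is_dplus F }.
Definition dval (F : Dplus) : ER -> R := proj1_sig F.

Definition Dle (F L : Dplus) : Prop := forall x, dval F x <= dval L x.

Definition H0_fun (x : ER) : R :=
  match x with NInf => 0 | Fin r => if Rle_dec r 0 then 0 else 1 | PInf => 1 end.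
Definition Hinf_fun (x : ER) : R :=
  match x with NInf => 0 | Fin _ => 0 | PInf => 1 end.

Lemma H0_dplus : is_dplus H0_fun.
Proof.
  unfold is_dplus, H0_fun; repeat split; try lra.
  - destruct (Rle_dec 0 0); lra.
  - destruct x as [|r|]; try lra; destruct (Rle_dec r 0); lra.
  - destruct x as [|r|]; try lra; destruct (Rle_dec r 0); lra.
  - intros r s Hrs; destruct (Rle_dec r 0), (Rle_dec s 0); lra.
  - intros t eps He. destruct (Rle_dec t 0).
    + exists 1; split; [lra|]. intros s Hs; destruct (Rle_dec s 0); lra.
    + exists t; split; [lra|]. intros s Hs; destruct (Rle_dec s 0); lra.
Qed.

Lemma Hinf_dplus : is_dplus Hinf_fun.
Proof.
  unfold is_dplus, Hinf_fun; repeat split; try lra.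
  - destruct x; lra.
  - destruct x; lra.
  - intros; lra.
  - intros t eps He; exists 1; split; intros; lra.
Qed.

Definition H0 : Dplus := exist _ H0_fun H0_dplus.
Definition Hinf : Dplus := exist _ Hinf_fun Hinf_dplus.

(* Least upper bounds in (Delta^+, <=) and the supremum operator
   (Delta^+ is a complete lattice, so the lub always exists). *)
Definition is_lub_D (P : Dplus -> Prop) (S : Dplus) : Prop :=
  (forall F, P F -> Dle F S) /\ (forall U, (forall F, P F -> Dle F U) -> Dle S U).
Definition Dsup (P : Dplus -> Prop) : Dplus :=
  epsilon (inhabits H0) (fun S => is_lub_D P S).

Definition triangle_function (star : Dplus -> Dplus -> Dplus) : Prop :=
  (forall F L, star F L = star L F) /\
  (forall F L M, star F (star L M) = star (star F L) M) /\
  (forall F F' L, Dle F F' -> Dle (star F L) (star F' L)) /\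
  (forall F, star F H0 = F).

Definition sup_continuous (star : Dplus -> Dplus -> Dplus) : Prop :=
  forall (I : Type) (F : I -> Dplus) (L : Dplus), inhabited I ->
    Dsup (fun X => exists i, X = star (F i) L) =
    star (Dsup (fun X => exists i, X = F i)) L.

Definition wconv (Fn : nat -> Dplus) (F : Dplus) : Prop :=
  forall t : R, continuity_pt (fun s => dval F (Fin s)) t ->
    Un_cv (fun n => dval (Fn n) (Fin t)) (dval F (Fin t)).

Definition wconv2 (Fnp : nat -> nat -> Dplus) (F : Dplus) : Prop :=
  forall t : R, continuity_pt (fun s => dval F (Fin s)) t ->
    forall eps, 0 < eps -> exists N : nat, forall n p, (n >= N)%nat -> (p >= N)%nat ->
      Rabs (dval (Fnp n p) (Fin t) - dval F (Fin t)) < eps.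

Definition tf_continuous (star : Dplus -> Dplus -> Dplus) : Prop :=
  forall Fn F Ln L, wconv Fn F -> wconv Ln L ->
    wconv (fun n => star (Fn n) (Ln n)) (star F L).

Definition units_trivial (star : Dplus -> Dplus -> Dplus) : Prop :=
  forall F, (exists L, star F L = H0) -> F = H0.

Definition is_group {G : Type} (mul : G -> G -> G) (e : G) (inv : G -> G) : Prop :=
  (forall x y z, mul x (mul y z) = mul (mul x y) z) /\
  (forall x, mul e x = x /\ mul x e = x) /\
  (forall x, mul (inv x) x = e /\ mul x (inv x) = e).

Definition is_pm_space {G : Type} (star : Dplus -> Dplus -> Dplus)
  (D : G -> G -> Dplus) : Prop :=
  (forall p q, D p q = H0 <-> p = q) /\
  (forall p q, D p q = D q p) /\
  (forall p q r, Dle (star (D p q) (D q r)) (D p r)).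

Definition is_invariant_pm_group {G : Type} (star : Dplus -> Dplus -> Dplus)
  (mul : G -> G -> G) (D : G -> G -> Dplus) : Prop :=
  is_pm_space star D /\
  (forall p q r, D (mul p r) (mul q r) = D p q /\ D (mul r p) (mul r q) = D p q).

Definition cauchy {G : Type} (D : G -> G -> Dplus) (z : nat -> G) : Prop :=
  wconv2 (fun n p => D (z n) (z p)) H0.

Definition complete {G : Type} (D : G -> G -> Dplus) : Prop :=
  forall z, cauchy D z -> exists x, wconv (fun n => D (z n) x) H0.

Definition Lip1 {G : Type} (star : Dplus -> Dplus -> Dplus) (D : G -> G -> Dplus)
  (f : G -> Dplus) : Prop :=
  forall x y, Dle (star (D x y) (f y)) (f x).

Definition odot {G : Type} (star : Dplus -> Dplus -> Dplus) (mul : G -> G -> G)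
  (f g : G -> Dplus) : G -> Dplus :=
  fun x => Dsup (fun X => exists y z, mul y z = x /\ X = star (f y) (g z)).

Definition PiG {G : Type} (star : Dplus -> Dplus -> Dplus) (D : G -> G -> Dplus)
  (f : G -> Dplus) : Prop :=
  Lip1 star D f /\
  exists a : nat -> G, cauchy D a /\ forall x, wconv (fun n => D (a n) x) (f x).

Definition bbD {G : Type} (star : Dplus -> Dplus -> Dplus) (f g : G -> Dplus) : Dplus :=
  Dsup (fun X => exists x, X = star (f x) (g x)).

Definition bbDbar {G : Type} (star : Dplus -> Dplus -> Dplus) (D : G -> G -> Dplus)
  (f g : G -> Dplus) : Dplus :=
  if excluded_middle_informative (PiG star D f /\ PiG star D g) then bbD star f g
  else if excluded_middle_informative (f = g) then H0 else Hinf.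

(* The functions [D a] are exactly the units of the monoid (Lip1, odot):
   [D a odot D b = D (a b)], and conversely, if [f odot g = D e], then nearly
   optimal splittings [e = y_k (y_k)^-1] in the supremum defining
   [(f odot g) e = H0] give a Cauchy sequence [y_k] whose limit [a] satisfies
   [f a = H0] and [f = D a].  A monoid isomorphism [Phi] preserves units, so
   [Phi (D a) = D' (I a)] defines a group isomorphism [I], isometric because
   [bbDbar (D a) (D b) = D a b].  Conversely, an isometric isomorphism [I]
   transports Lip1 functions by composition with its inverse. *)

From Stdlib Require Import Reals Lra Lia Classical ClassicalEpsilon IndefiniteDescription
  FunctionalExtensionality PropExtensionality.
Open Scope R_scope.

Lemma dval_dplus (F : Dplus) : is_dplus (dval F).
Proof. exact (proj2_sig F). Qed.

Lemma dval_NInf F : dval F NInf = 0.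
Proof. apply (dval_dplus F). Qed.

Lemma dval_PInf F : dval F PInf = 1.
Proof. apply (dval_dplus F). Qed.

Lemma dval_bounds F x : 0 <= dval F x <= 1.
Proof. apply (dval_dplus F). Qed.

Lemma dval_mono F r s : r <= s -> dval F (Fin r) <= dval F (Fin s).
Proof. apply (dval_dplus F). Qed.

Lemma dval_left_cont F t eps : 0 < eps -> exists d, 0 < d /\
  forall s, t - d < s < t -> dval F (Fin t) - dval F (Fin s) < eps.
Proof. apply (dval_dplus F). Qed.

Lemma dval_nonpos F r : r <= 0 -> dval F (Fin r) = 0.
Proof.
  intro hr. pose proof (dval_mono F r 0 hr). pose proof (dval_bounds F (Fin r)).
  destruct (dval_dplus F) as (_ & _ & h0 & _). lra.
Qed.

Lemma Dplus_ext (F L : Dplus) : (forall x, dval F x = dval L x) -> F = L.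
Proof.
  destruct F as [f hf], L as [l hl]; unfold dval; simpl; intro h.
  assert (f = l) by (apply functional_extensionality; exact h); subst.
  f_equal; apply proof_irrelevance.
Qed.

Lemma Dle_refl F : Dle F F.
Proof. intro x; lra. Qed.

Lemma Dle_trans F L M : Dle F L -> Dle L M -> Dle F M.
Proof. intros h1 h2 x; specialize (h1 x); specialize (h2 x); lra. Qed.

Lemma Dle_antisym F L : Dle F L -> Dle L F -> F = L.
Proof. intros h1 h2; apply Dplus_ext; intro x; specialize (h1 x); specialize (h2 x); lra. Qed.

Lemma H0_pos r : 0 < r -> dval H0 (Fin r) = 1.
Proof. intro h; simpl; destruct (Rle_dec r 0); lra. Qed.

Lemma Dle_H0 F : Dle F H0.
Proof.
  intros [|r|]; simpl.
  - rewrite dval_NInf; lra.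
  - pose proof (dval_bounds F (Fin r)).
    destruct (Rle_dec r 0); [rewrite dval_nonpos|]; lra.
  - rewrite dval_PInf; lra.
Qed.

(* The lattice supremum of a family is taken pointwise on [Fin r]; the real
   supremum includes 0 so that the empty family has supremum [Hinf]. *)
Definition values_at (P : Dplus -> Prop) (r : R) (v : R) : Prop :=
  v = 0 \/ exists F, P F /\ v = dval F (Fin r).

Definition sup_at (P : Dplus -> Prop) (r : R) : R.
Proof.
  refine (proj1_sig (completeness (values_at P r) _ _)).
  - exists 1; intros v [->|[F [_ ->]]]; [lra|apply dval_bounds].
  - exists 0; left; reflexivity.
Defined.

Lemma sup_at_lub P r : is_lub (values_at P r) (sup_at P r).
Proof. unfold sup_at; destruct completeness; auto. Qed.

Lemma sup_at_ge0 P r : 0 <= sup_at P r.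
Proof. apply (sup_at_lub P r); left; reflexivity. Qed.

Lemma sup_at_ge P r F : P F -> dval F (Fin r) <= sup_at P r.
Proof. intro hF; apply (sup_at_lub P r); right; eauto. Qed.

Lemma sup_at_le P r b : 0 <= b -> (forall F, P F -> dval F (Fin r) <= b) -> sup_at P r <= b.
Proof. intros h0 h; apply (sup_at_lub P r); intros v [->|[F [hF ->]]]; auto. Qed.

Definition sup_fun (P : Dplus -> Prop) (x : ER) : R :=
  match x with NInf => 0 | Fin r => sup_at P r | PInf => 1 end.

Lemma sup_fun_dplus P : is_dplus (sup_fun P).
Proof.
  repeat split; simpl; try lra.
  - apply Rle_antisym; [|apply sup_at_ge0].
    apply sup_at_le; [lra|]. intros F _; rewrite dval_nonpos; lra.
  - destruct x; simpl; try lra. apply sup_at_ge0.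
  - destruct x; simpl; try lra. apply sup_at_le; [lra|]. intros F _; apply dval_bounds.
  - intros r s hrs. apply sup_at_le; [apply sup_at_ge0|]. intros F hF.
    apply Rle_trans with (dval F (Fin s)); [apply dval_mono; auto|apply sup_at_ge; auto].
  - intros t eps he.
    destruct (classic (exists v, values_at P t v /\ v > sup_at P t - eps/2)) as [[v [hv hgt]]|hn].
    + destruct hv as [->|[F [hF ->]]].
      * exists 1; split; [lra|]; intros s _; pose proof (sup_at_ge0 P s); lra.
      * destruct (dval_left_cont F t (eps/2)) as [d [hd hF']]; [lra|].
        exists d; split; auto; intros s hs. specialize (hF' s hs).
        pose proof (sup_at_ge P s F hF); lra.
    + exfalso. assert (sup_at P t <= sup_at P t - eps/2); [|lra].
      apply (sup_at_lub P t); intros v hv.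
      apply Rnot_lt_le; intro hc; apply hn; exists v; split; auto; lra.
Qed.

Definition pointwise_sup (P : Dplus -> Prop) : Dplus := exist _ (sup_fun P) (sup_fun_dplus P).

Lemma pointwise_sup_lub P : is_lub_D P (pointwise_sup P).
Proof.
  split.
  - intros F hF [|r|]; simpl; [rewrite dval_NInf; lra|apply sup_at_ge; auto|rewrite dval_PInf; lra].
  - intros U hU [|r|]; simpl; [rewrite dval_NInf; lra| |rewrite dval_PInf; lra].
    apply sup_at_le; [apply dval_bounds|]. intros F hF; apply hU; auto.
Qed.

Lemma Dsup_lub P : is_lub_D P (Dsup P).
Proof. unfold Dsup; apply epsilon_spec; exists (pointwise_sup P); apply pointwise_sup_lub. Qed.

Lemma Dsup_ub P F : P F -> Dle F (Dsup P).
Proof. apply (Dsup_lub P). Qed.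

Lemma Dsup_least P U : (forall F, P F -> Dle F U) -> Dle (Dsup P) U.
Proof. apply (Dsup_lub P). Qed.

Lemma Dsup_max P M : P M -> (forall F, P F -> Dle F M) -> Dsup P = M.
Proof. intros hM hub; apply Dle_antisym; [apply Dsup_least|apply Dsup_ub]; auto. Qed.

Lemma Dsup_ext P Q : (forall X, P X <-> Q X) -> Dsup P = Dsup Q.
Proof.
  intro h. replace Q with P; auto.
  apply functional_extensionality; intro X; apply propositional_extensionality, h.
Qed.

Lemma Dsup_eq_pointwise P : Dsup P = pointwise_sup P.
Proof.
  apply Dle_antisym; [apply Dsup_least, pointwise_sup_lub|].
  apply (pointwise_sup_lub P); apply Dsup_ub.
Qed.

Lemma Dsup_H0_approx P t eps : Dsup P = H0 -> 0 < t -> 0 < eps ->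
  exists F, P F /\ dval F (Fin t) > 1 - eps.
Proof.
  intros hP ht he. apply NNPP; intro hn.
  assert (hsup : sup_at P t = 1).
  { rewrite Dsup_eq_pointwise in hP. apply (f_equal (fun F => dval F (Fin t))) in hP.
    rewrite H0_pos in hP by auto; exact hP. }
  assert (sup_at P t <= Rmax 0 (1 - eps)); [|unfold Rmax in *; destruct Rle_dec; lra].
  apply sup_at_le; [apply Rmax_l|]. intros F hF. apply Rnot_lt_le; intro hc.
  apply hn; exists F; split; auto. pose proof (Rmax_r 0 (1 - eps)); lra.
Qed.

Section TriangleFunction.

Context {star : Dplus -> Dplus -> Dplus} (Hs : triangle_function star).

Lemma star_comm F L : star F L = star L F.
Proof. apply Hs. Qed.

Lemma star_assoc F L M : star F (star L M) = star (star F L) M.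
Proof. apply Hs. Qed.

Lemma star_H0r F : star F H0 = F.
Proof. apply Hs. Qed.

Lemma star_mono_l F F' L : Dle F F' -> Dle (star F L) (star F' L).
Proof. apply Hs. Qed.

Lemma star_mono F F' L L' : Dle F F' -> Dle L L' -> Dle (star F L) (star F' L').
Proof.
  intros h1 h2. apply Dle_trans with (star F' L); [apply star_mono_l; auto|].
  rewrite (star_comm F' L), (star_comm F' L'); apply star_mono_l; auto.
Qed.

Lemma star_le_l F L : Dle (star F L) F.
Proof.
  rewrite <- (star_H0r F) at 2. apply star_mono; [apply Dle_refl|apply Dle_H0].
Qed.

Lemma star_le_r F L : Dle (star F L) L.
Proof. rewrite star_comm; apply star_le_l. Qed.

End TriangleFunction.

Lemma wconv_H0_iff (X : nat -> Dplus) :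
  wconv X H0 <-> forall t, 0 < t -> Un_cv (fun n => dval (X n) (Fin t)) 1.
Proof.
  split.
  - intros hX t ht. rewrite <- (H0_pos t ht). apply hX.
    apply continuity_pt_locally_ext with (f := fun _ => 1) (a := t); auto.
    + intros s hs. unfold Rdist in hs. apply Rabs_def2 in hs. rewrite H0_pos; lra.
    + apply continuity_pt_const; intros a b; reflexivity.
  - intros hX t _ eps he. destruct (Rle_dec t 0) as [ht|ht].
    + exists 0%nat; intros n _. unfold Rdist; simpl.
      rewrite dval_nonpos by auto; destruct Rle_dec; [|lra].
      rewrite Rminus_diag, Rabs_R0; auto.
    + rewrite H0_pos by lra. apply hX; lra.
Qed.

Lemma wconv_H0_mono (X Y : nat -> Dplus) :
  wconv X H0 -> (forall n, Dle (X n) (Y n)) -> wconv Y H0.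
Proof.
  rewrite !wconv_H0_iff. intros hX hXY t ht eps he.
  destruct (hX t ht eps he) as [N hN]. exists N; intros n hn. specialize (hN n hn).
  unfold Rdist in *. pose proof (hXY n (Fin t)). pose proof (dval_bounds (Y n) (Fin t)).
  apply Rabs_def2 in hN. apply Rabs_def1; lra.
Qed.

Lemma wconv_const_H0 F : wconv (fun _ => F) H0 -> F = H0.
Proof.
  rewrite wconv_H0_iff; intro hF. apply Dle_antisym; [apply Dle_H0|].
  intros [|r|]; simpl.
  - rewrite dval_NInf; lra.
  - destruct (Rle_dec r 0); [rewrite dval_nonpos; lra|].
    apply Rnot_lt_le; intro hlt.
    destruct (hF r ltac:(lra) (1 - dval F (Fin r))) as [N hN]; [lra|].
    specialize (hN N (le_n N)); unfold Rdist in hN; apply Rabs_def2 in hN; lra.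
  - rewrite dval_PInf; lra.
Qed.

Lemma wconv_H0_of_approx (X : nat -> Dplus) :
  (forall k, dval (X k) (Fin (/ (INR k + 1))) > 1 - / (INR k + 1)) -> wconv X H0.
Proof.
  rewrite wconv_H0_iff; intros hX t ht eps he.
  destruct (archimed_cor1 (Rmin t eps)) as [N [hN hN0]]; [apply Rmin_pos; lra|].
  exists N; intros n hn.
  assert (hinv : / (INR n + 1) < Rmin t eps).
  { apply Rle_lt_trans with (/ INR N); auto. apply Rinv_le_contravar.
    - apply lt_0_INR; lia.
    - apply (le_INR N n) in hn; lra. }
  pose proof (Rmin_l t eps); pose proof (Rmin_r t eps).
  pose proof (hX n). pose proof (dval_mono (X n) _ t (Rlt_le _ _ (Rlt_le_trans _ _ _ hinv (Rmin_l t eps)))).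
  pose proof (dval_bounds (X n) (Fin t)).
  unfold Rdist; apply Rabs_def1; lra.
Qed.

Lemma wconv2_of_subsequences (X : nat -> nat -> Dplus) F :
  (forall n p : nat -> nat, (forall k, (k <= n k)%nat) -> (forall k, (k <= p k)%nat) ->
     wconv (fun k => X (n k) (p k)) F) ->
  wconv2 X F.
Proof.
  intros hX t ht eps he. apply NNPP; intro hn.
  assert (hbad : forall N, exists np : nat * nat, (N <= fst np)%nat /\ (N <= snd np)%nat /\
     ~ Rabs (dval (X (fst np) (snd np)) (Fin t) - dval F (Fin t)) < eps).
  { intro N; apply NNPP; intro hc; apply hn; exists N; intros n p h1 h2.
    apply NNPP; intro hc2; apply hc; exists (n, p); auto. }
  destruct (functional_choice _ hbad) as [np hnp].
  destruct (hX (fun k => fst (np k)) (fun k => snd (np k))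
              (fun k => proj1 (hnp k)) (fun k => proj1 (proj2 (hnp k))) t ht eps he) as [N hN].
  apply (proj2 (proj2 (hnp N))), (hN N (le_n N)).
Qed.

Lemma wconv_subseq (X : nat -> Dplus) F (n : nat -> nat) :
  wconv X F -> (forall k, (k <= n k)%nat) -> wconv (fun k => X (n k)) F.
Proof.
  intros hX hn t ht eps he. destruct (hX t ht eps he) as [N hN].
  exists N; intros k hk. apply hN. specialize (hn k); lia.
Qed.

Section ContinuousTriangleFunction.

Context {star : Dplus -> Dplus -> Dplus} (Hs : triangle_function star)
  (Hcont : tf_continuous star).

Lemma wconv_star_H0 (X Y : nat -> Dplus) :
  wconv X H0 -> wconv Y H0 -> wconv (fun n => star (X n) (Y n)) H0.
Proof. intros hX hY. rewrite <- (star_H0r Hs H0). apply Hcont; auto. Qed.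

Lemma cauchy_of_lower_bound {G : Type} (D : G -> G -> Dplus) (y : nat -> G) (h : nat -> Dplus) :
  wconv h H0 -> (forall n p, Dle (star (h n) (h p)) (D (y n) (y p))) -> cauchy D y.
Proof.
  intros hh hb. apply wconv2_of_subsequences; intros n p hn hp.
  apply (wconv_H0_mono (fun k => star (h (n k)) (h (p k)))); [|intro; apply hb].
  apply wconv_star_H0; apply wconv_subseq; auto.
Qed.

End ContinuousTriangleFunction.

Section Group.

Context {G : Type} {mul : G -> G -> G} {e : G} {inv : G -> G} (HG : is_group mul e inv).

Lemma mulgA x y z : mul x (mul y z) = mul (mul x y) z.
Proof. apply HG. Qed.

Lemma mul1g x : mul e x = x.
Proof. apply HG. Qed.

Lemma mulg1 x : mul x e = x.
Proof. apply HG. Qed.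

Lemma mulVg x : mul (inv x) x = e.
Proof. apply HG. Qed.

Lemma mulgV x : mul x (inv x) = e.
Proof. apply HG. Qed.

Lemma mulVKg x y : mul x (mul (inv x) y) = y.
Proof. rewrite mulgA, mulgV; apply mul1g. Qed.

Lemma mulgVK x y : mul (mul x (inv y)) y = x.
Proof. rewrite <- mulgA, mulVg; apply mulg1. Qed.

Lemma inv_unique y z : mul y z = e -> z = inv y.
Proof. intro h. rewrite <- (mul1g z), <- (mulVg y), <- mulgA, h; apply mulg1. Qed.

End Group.

Section InvariantPMGroup.

Context {star : Dplus -> Dplus -> Dplus} (Hs : triangle_function star).
Context {G : Type} {mul : G -> G -> G} {e : G} {inv : G -> G} (HG : is_group mul e inv).
Context {D : G -> G -> Dplus} (HD : is_invariant_pm_group star mul D).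

Lemma D_eq_H0 p q : D p q = H0 <-> p = q.
Proof. apply HD. Qed.

Lemma D_refl p : D p p = H0.
Proof. apply D_eq_H0; reflexivity. Qed.

Lemma D_sym p q : D p q = D q p.
Proof. apply HD. Qed.

Lemma D_triangle p q r : Dle (star (D p q) (D q r)) (D p r).
Proof. apply HD. Qed.

Lemma D_mulr p q r : D (mul p r) (mul q r) = D p q.
Proof. apply HD. Qed.

Lemma D_mull p q r : D (mul r p) (mul r q) = D p q.
Proof. apply HD. Qed.

Lemma D_inj a b : D a = D b -> a = b.
Proof. intro h. apply D_eq_H0. rewrite h; apply D_refl. Qed.

Lemma D_inv a b : D (inv a) (inv b) = D b a.
Proof.
  rewrite <- (D_mull (inv a) (inv b) b), (mulgV HG), <- (D_mulr _ _ a).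
  rewrite (mulgVK HG), (mul1g HG); reflexivity.
Qed.

Lemma D1_mulV x a : D e (mul x (inv a)) = D a x.
Proof. rewrite <- (D_mulr _ _ a), (mul1g HG), (mulgVK HG); reflexivity. Qed.

Lemma D_mulV x y z : D x (mul y z) = D (mul x (inv z)) y.
Proof. rewrite <- (D_mulr _ y z), (mulgVK HG); reflexivity. Qed.

Lemma Lip1_D a : Lip1 star D (D a).
Proof. intros x y. rewrite (star_comm Hs), (D_sym x y). apply D_triangle. Qed.

Lemma odot_D1 f : Lip1 star D f -> odot star mul f (D e) = f.
Proof.
  intro hf; apply functional_extensionality; intro x; apply Dsup_max.
  - exists x, e; split; [apply (mulg1 HG)|]. rewrite D_refl, (star_H0r Hs); reflexivity.
  - intros F [y [z [hyz ->]]].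
    rewrite <- (D_mull e z y), (mulg1 HG), hyz, (star_comm Hs), D_sym; apply hf.
Qed.

Lemma odot_1D f : Lip1 star D f -> odot star mul (D e) f = f.
Proof.
  intro hf; apply functional_extensionality; intro x; apply Dsup_max.
  - exists e, x; split; [apply (mul1g HG)|]. rewrite D_refl, (star_comm Hs), (star_H0r Hs); reflexivity.
  - intros F [y [z [hyz ->]]]. rewrite <- (D_mulr e y z), (mul1g HG), hyz, D_sym; apply hf.
Qed.

Lemma odot_DD a b : odot star mul (D a) (D b) = D (mul a b).
Proof.
  apply functional_extensionality; intro x; apply Dsup_max.
  - exists a, (mul (inv a) x); split; [apply (mulVKg HG)|].
    rewrite D_refl, (star_comm Hs), (star_H0r Hs), <- (D_mull b _ a), (mulVKg HG); reflexivity.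
  - intros F [y [z [hyz ->]]].
    rewrite <- (D_mulr a y b), <- (D_mull b z y), hyz; apply D_triangle.
Qed.

Lemma PiG_D a : PiG star D (D a).
Proof.
  split; [apply Lip1_D|]. exists (fun _ => a); split.
  - intros t _ eps he; exists 0%nat; intros n p _ _.
    rewrite D_refl, Rminus_diag, Rabs_R0; auto.
  - intros x t _ eps he; exists 0%nat; intros n _.
    unfold Rdist; rewrite Rminus_diag, Rabs_R0; auto.
Qed.

Lemma bbDbar_D a b : bbDbar star D (D a) (D b) = D a b.
Proof.
  unfold bbDbar. destruct excluded_middle_informative as [_|hn].
  - apply Dsup_max.
    + exists a. rewrite D_refl, (star_comm Hs), (star_H0r Hs), D_sym; reflexivity.
    + intros F [x ->]. rewrite (D_sym b x). apply D_triangle.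
  - exfalso; apply hn; split; apply PiG_D.
Qed.

Lemma Lip1_odot (Hsup : sup_continuous star) f g :
  Lip1 star D f -> Lip1 star D g -> Lip1 star D (odot star mul f g).
Proof.
  intros hf hg x x'.
  set (I := {p : G * G | mul (fst p) (snd p) = x'}).
  assert (hsplit : odot star mul f g x' =
                   Dsup (fun X => exists i : I, X = star (f (fst (proj1_sig i))) (g (snd (proj1_sig i))))).
  { apply Dsup_ext; intro X; split.
    - intros [y [z [h ->]]]. exists (exist _ (y, z) h); reflexivity.
    - intros [[[y z] h] ->]. exists y, z; auto. }
  rewrite hsplit, (star_comm Hs), <- Hsup by (constructor; exists (x', e); apply (mulg1 HG)).
  apply Dsup_least. intros F [[[y z] hyz] ->]; simpl in *.
  apply Dle_trans with (star (f (mul x (inv z))) (g z)).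
  - rewrite <- hyz, D_mulV, (star_comm Hs), (star_assoc Hs).
    apply (star_mono_l Hs), hf.
  - apply Dsup_ub. exists (mul x (inv z)), z; split; [apply (mulgVK HG)|reflexivity].
Qed.

Section Units.

Context (Hcont : tf_continuous star) (HDc : complete D).

Lemma Lip1_H0_at_limit f (y : nat -> G) a : Lip1 star D f ->
  wconv (fun n => D (y n) a) H0 -> wconv (fun n => f (y n)) H0 -> f a = H0.
Proof.
  intros hf hya hfy. apply wconv_const_H0.
  apply (wconv_H0_mono (fun n => star (D a (y n)) (f (y n)))); [|intro; apply hf].
  apply (wconv_star_H0 Hs Hcont); auto.
  replace (fun n => D a (y n)) with (fun n => D (y n) a); auto.
  apply functional_extensionality; intro; apply D_sym.
Qed.

Lemma odot_eq_D1_approx f g : odot star mul f g = D e ->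
  exists y : nat -> G, wconv (fun k => star (f (y k)) (g (inv (y k)))) H0.
Proof.
  intro hfg.
  assert (hsup : odot star mul f g e = H0) by (rewrite hfg; apply D_refl).
  assert (hk : forall k, exists y,
    dval (star (f y) (g (inv y))) (Fin (/ (INR k + 1))) > 1 - / (INR k + 1)).
  { intro k. assert (hpos : 0 < / (INR k + 1)).
    { apply Rinv_0_lt_compat; pose proof (pos_INR k); lra. }
    destruct (Dsup_H0_approx _ _ _ hsup hpos hpos) as [F [[y [z [hyz ->]]] hF]].
    exists y. rewrite <- (inv_unique HG y z hyz); exact hF. }
  destruct (functional_choice _ hk) as [y hy].
  exists y; apply wconv_H0_of_approx; exact hy.
Qed.

Lemma D_of_odot_eq_D1 f g a : Lip1 star D f -> odot star mul f g = D e ->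
  f a = H0 -> g (inv a) = H0 -> f = D a.
Proof.
  intros hf hfg hfa hga; apply functional_extensionality; intro x; apply Dle_antisym.
  - rewrite <- (star_H0r Hs (f x)), <- hga, <- D1_mulV, <- hfg.
    apply Dsup_ub; exists x, (inv a); split; [reflexivity|auto].
  - rewrite D_sym, <- (star_H0r Hs (D x a)), <- hfa; apply hf.
Qed.

Lemma odot_eq_D1 f g : Lip1 star D f -> Lip1 star D g ->
  odot star mul f g = D e -> exists a, f = D a.
Proof.
  intros hf hg hfg. destruct (odot_eq_D1_approx f g hfg) as [y hy].
  set (h := fun k => star (f (y k)) (g (inv (y k)))) in hy.
  assert (hcauchy : cauchy D y).
  { apply (cauchy_of_lower_bound Hs Hcont D y h hy); intros n p.
    apply Dle_trans with (star (f (y p)) (g (inv (y n)))).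
    - rewrite (star_comm Hs). apply (star_mono Hs); [apply (star_le_l Hs)|apply (star_le_r Hs)].
    - rewrite <- D1_mulV, <- hfg. apply Dsup_ub; eauto. }
  destruct (HDc y hcauchy) as [a ha].
  exists a; apply (D_of_odot_eq_D1 f g a hf hfg).
  - apply (Lip1_H0_at_limit f y a hf ha).
    apply (wconv_H0_mono h _ hy); intro; apply (star_le_l Hs).
  - apply (Lip1_H0_at_limit g (fun n => inv (y n)) (inv a) hg).
    + replace (fun n => D (inv (y n)) (inv a)) with (fun n => D (y n) a); auto.
      apply functional_extensionality; intro n; rewrite D_inv; apply D_sym.
    + apply (wconv_H0_mono h _ hy); intro; apply (star_le_r Hs).
Qed.

End Units.

End InvariantPMGroup.

Definition isometric_isomorphism {G G' : Type} (mul : G -> G -> G) (D : G -> G -> Dplus)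
  (mul' : G' -> G' -> G') (D' : G' -> G' -> Dplus) (I : G -> G') : Prop :=
  (forall x y, I x = I y -> x = y) /\ (forall x', exists x, I x = x') /\
  (forall x y, I (mul x y) = mul' (I x) (I y)) /\ (forall x y, D' (I x) (I y) = D x y).

Definition isometric_Lip1_isomorphism (star : Dplus -> Dplus -> Dplus) {G G' : Type}
  (mul : G -> G -> G) (D : G -> G -> Dplus) (mul' : G' -> G' -> G') (D' : G' -> G' -> Dplus)
  (Phi : (G -> Dplus) -> (G' -> Dplus)) : Prop :=
  (forall f, Lip1 star D f -> Lip1 star D' (Phi f)) /\
  (forall f g, Lip1 star D f -> Lip1 star D g -> Phi f = Phi g -> f = g) /\
  (forall f', Lip1 star D' f' -> exists f, Lip1 star D f /\ Phi f = f') /\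
  (forall f g, Lip1 star D f -> Lip1 star D g ->
      Phi (odot star mul f g) = odot star mul' (Phi f) (Phi g)) /\
  (forall f g, Lip1 star D f -> Lip1 star D g ->
      bbDbar star D' (Phi f) (Phi g) = bbDbar star D f g).

Lemma isometric_isomorphism_inverse {G G' : Type} (mul : G -> G -> G) D (mul' : G' -> G' -> G') D' I :
  isometric_isomorphism mul D mul' D' I ->
  exists J, isometric_isomorphism mul' D' mul D J /\
    (forall x, J (I x) = x) /\ (forall x', I (J x') = x').
Proof.
  intros (Iinj & Isurj & Imul & Iiso).
  destruct (functional_choice _ Isurj) as [J IJ].
  assert (JI : forall x, J (I x) = x) by (intro; apply Iinj, IJ).
  exists J; repeat split; auto.
  - intros x' y' h. rewrite <- (IJ x'), <- (IJ y'), h; reflexivity.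
  - intro x; exists (I x); apply JI.
  - intros x' y'; apply Iinj; rewrite Imul, !IJ; reflexivity.
  - intros x' y'; rewrite <- Iiso, !IJ; reflexivity.
Qed.

Section Pullback.

Context (star : Dplus -> Dplus -> Dplus).
Context {A B : Type} {mulA : A -> A -> A} {DA : A -> A -> Dplus}
  {mulB : B -> B -> B} {DB : B -> B -> Dplus}.
Context (K : B -> A) (HK : isometric_isomorphism mulB DB mulA DA K).
Context (L : A -> B) (LK : forall x, L (K x) = x) (KL : forall a, K (L a) = a).

Definition pullback (f : A -> Dplus) : B -> Dplus := fun x => f (K x).

Lemma pullback_inj f g : pullback f = pullback g -> f = g.
Proof.
  intro h; apply functional_extensionality; intro a.
  rewrite <- (KL a); exact (f_equal (fun k => k (L a)) h).
Qed.

Lemma Lip1_pullback f : Lip1 star DA f -> Lip1 star DB (pullback f).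
Proof. intros hf x y; unfold pullback; rewrite <- (proj2 (proj2 (proj2 HK))); apply hf. Qed.

Lemma pullback_Lip1 f : Lip1 star DB (pullback f) -> Lip1 star DA f.
Proof.
  intros hf a b. rewrite <- (KL a), <- (KL b), (proj2 (proj2 (proj2 HK))). apply hf.
Qed.

Lemma pullback_surj f' : Lip1 star DB f' ->
  exists f, Lip1 star DA f /\ pullback f = f'.
Proof.
  intro hf'. assert (hpb : pullback (fun a => f' (L a)) = f').
  { apply functional_extensionality; intro x; unfold pullback; rewrite LK; reflexivity. }
  exists (fun a => f' (L a)); split; auto. apply pullback_Lip1; rewrite hpb; exact hf'.
Qed.

Lemma PiG_pullback f : PiG star DA f <-> PiG star DB (pullback f).
Proof.
  destruct HK as (_ & _ & _ & Kiso).
  split; intros [hf [s [hs hlim]]]; split.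
  - apply Lip1_pullback, hf.
  - exists (fun n => L (s n)); split.
    + unfold cauchy.
      replace (fun n p => DB (L (s n)) (L (s p))) with (fun n p => DA (s n) (s p)); [exact hs|].
      extensionality n; extensionality p; rewrite <- Kiso, !KL; reflexivity.
    + intro x. replace (fun n => DB (L (s n)) x) with (fun n => DA (s n) (K x)); [apply hlim|].
      extensionality n; rewrite <- Kiso, KL; reflexivity.
  - apply pullback_Lip1, hf.
  - exists (fun n => K (s n)); split.
    + unfold cauchy.
      replace (fun n p => DA (K (s n)) (K (s p))) with (fun n p => DB (s n) (s p)); [exact hs|].
      extensionality n; extensionality p; symmetry; apply Kiso.
    + intro a; rewrite <- (KL a).
      replace (fun n => DA (K (s n)) (K (L a))) with (fun n => DB (s n) (L a)); [apply hlim|].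
      extensionality n; symmetry; apply Kiso.
Qed.

Lemma odot_pullback f g : odot star mulB (pullback f) (pullback g) = pullback (odot star mulA f g).
Proof.
  destruct HK as (Kinj & _ & Kmul & _).
  apply functional_extensionality; intro x; apply Dsup_ext; intro X; split.
  - intros [y [z [hyz ->]]]. exists (K y), (K z); rewrite <- Kmul, hyz; auto.
  - intros [a [b [hab ->]]]. exists (L a), (L b); split.
    + apply Kinj; rewrite Kmul, !KL; exact hab.
    + unfold pullback; rewrite !KL; reflexivity.
Qed.

Lemma bbD_pullback f g : bbD star (pullback f) (pullback g) = bbD star f g.
Proof.
  apply Dsup_ext; intro X; split.
  - intros [x ->]; exists (K x); reflexivity.
  - intros [a ->]; exists (L a); unfold pullback; rewrite KL; reflexivity.
Qed.

Lemma bbDbar_pullback f g : bbDbar star DB (pullback f) (pullback g) = bbDbar star DA f g.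
Proof.
  unfold bbDbar.
  destruct (excluded_middle_informative (PiG star DB (pullback f) /\ PiG star DB (pullback g))) as [h|h];
  destruct (excluded_middle_informative (PiG star DA f /\ PiG star DA g)) as [k|k].
  - apply bbD_pullback.
  - exfalso; apply k; split; apply PiG_pullback, h.
  - exfalso; apply h; split; apply PiG_pullback, k.
  - destruct (excluded_middle_informative (pullback f = pullback g)) as [h'|h'];
    destruct (excluded_middle_informative (f = g)) as [k'|k']; auto.
    + exfalso; apply k', pullback_inj, h'.
    + exfalso; apply h'; rewrite k'; reflexivity.
Qed.

End Pullback.

Lemma isometric_Lip1_isomorphism_of_group_iso star {G G' : Type}
  (mul : G -> G -> G) D (mul' : G' -> G' -> G') D' I :
  isometric_isomorphism mul D mul' D' I ->
  exists Phi, isometric_Lip1_isomorphism star mul D mul' D' Phi.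
Proof.
  intro HI. destruct (isometric_isomorphism_inverse mul D mul' D' I HI) as (J & HJ & JI & IJ).
  exists (pullback J); repeat split.
  - apply (Lip1_pullback star J HJ).
  - intros f g _ _; apply (pullback_inj J I JI).
  - apply (pullback_surj star J HJ I IJ JI).
  - intros f g _ _; symmetry; apply (odot_pullback star J HJ I JI).
  - intros f g _ _; apply (bbDbar_pullback star J HJ I JI).
Qed.

Section FromLip1Isomorphism.

Context {star : Dplus -> Dplus -> Dplus} (Hs : triangle_function star)
  (Hcont : tf_continuous star) (Hsup : sup_continuous star).
Context {G : Type} {mul : G -> G -> G} {e : G} {inv : G -> G} {D : G -> G -> Dplus}
  (HG : is_group mul e inv) (HD : is_invariant_pm_group star mul D) (HDc : complete D).
Context {G' : Type} {mul' : G' -> G' -> G'} {e' : G'} {inv' : G' -> G'} {D' : G' -> G' -> Dplus}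
  (HG' : is_group mul' e' inv') (HD' : is_invariant_pm_group star mul' D') (HDc' : complete D').
Context {Phi : (G -> Dplus) -> (G' -> Dplus)}
  (HPhi : isometric_Lip1_isomorphism star mul D mul' D' Phi).

Lemma Phi_Lip1 f : Lip1 star D f -> Lip1 star D' (Phi f).
Proof. apply HPhi. Qed.

Lemma Phi_inj f g : Lip1 star D f -> Lip1 star D g -> Phi f = Phi g -> f = g.
Proof. apply HPhi. Qed.

Lemma Phi_surj f' : Lip1 star D' f' -> exists f, Lip1 star D f /\ Phi f = f'.
Proof. apply HPhi. Qed.

Lemma Phi_odot f g : Lip1 star D f -> Lip1 star D g ->
  Phi (odot star mul f g) = odot star mul' (Phi f) (Phi g).
Proof. apply HPhi. Qed.

Lemma Phi_bbDbar f g : Lip1 star D f -> Lip1 star D g ->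
  bbDbar star D' (Phi f) (Phi g) = bbDbar star D f g.
Proof. apply HPhi. Qed.

Lemma Phi_D1 : Phi (D e) = D' e'.
Proof.
  destruct (Phi_surj _ (Lip1_D Hs HD' e')) as [f [hf hPf]].
  rewrite <- (odot_D1 Hs HG' HD' (Phi (D e))) by apply Phi_Lip1, (Lip1_D Hs HD).
  rewrite <- hPf, <- Phi_odot by (auto; apply (Lip1_D Hs HD)).
  rewrite (odot_1D Hs HG HD f hf); reflexivity.
Qed.

Lemma Phi_D_ex a : exists a', Phi (D a) = D' a'.
Proof.
  apply (odot_eq_D1 Hs HG' HD' Hcont HDc' _ (Phi (D (inv a)))); try apply Phi_Lip1, (Lip1_D Hs HD).
  rewrite <- Phi_odot by apply (Lip1_D Hs HD).
  rewrite (odot_DD Hs HG HD), (mulgV HG); exact Phi_D1.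
Qed.

Definition point_map (a : G) : G' := proj1_sig (constructive_indefinite_description _ (Phi_D_ex a)).

Lemma Phi_D a : Phi (D a) = D' (point_map a).
Proof. exact (proj2_sig (constructive_indefinite_description _ (Phi_D_ex a))). Qed.

Lemma point_map_isometry x y : D' (point_map x) (point_map y) = D x y.
Proof.
  rewrite <- (bbDbar_D Hs HD' (point_map x)), <- !Phi_D, Phi_bbDbar by apply (Lip1_D Hs HD).
  apply (bbDbar_D Hs HD).
Qed.

Lemma point_map_mul x y : point_map (mul x y) = mul' (point_map x) (point_map y).
Proof.
  apply (D_inj HD'). rewrite <- Phi_D, <- (odot_DD Hs HG HD), Phi_odot by apply (Lip1_D Hs HD).
  rewrite !Phi_D; apply (odot_DD Hs HG' HD').
Qed.

Lemma point_map_inj x y : point_map x = point_map y -> x = y.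
Proof.
  intro h. apply (D_eq_H0 HD). rewrite <- point_map_isometry, h. apply (D_refl HD').
Qed.

Lemma point_map_surj x' : exists x, point_map x = x'.
Proof.
  destruct (Phi_surj _ (Lip1_D Hs HD' x')) as [f [hf hPf]].
  destruct (Phi_surj _ (Lip1_D Hs HD' (inv' x'))) as [g [hg hPg]].
  assert (hfg : odot star mul f g = D e).
  { apply Phi_inj; [apply (Lip1_odot Hs HG HD); auto|apply (Lip1_D Hs HD)|].
    rewrite Phi_D1, Phi_odot, hPf, hPg by auto.
    rewrite (odot_DD Hs HG' HD'), (mulgV HG'); reflexivity. }
  destruct (odot_eq_D1 Hs HG HD Hcont HDc f g hf hg hfg) as [a ha].
  exists a. apply (D_inj HD'). rewrite <- Phi_D, <- ha; exact hPf.
Qed.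

Lemma isometric_isomorphism_of_Lip1_iso : exists I, isometric_isomorphism mul D mul' D' I.
Proof.
  exists point_map; repeat split.
  - apply point_map_inj.
  - apply point_map_surj.
  - apply point_map_mul.
  - apply point_map_isometry.
Qed.

End FromLip1Isomorphism.

Theorem mainTheorem17
  (star : Dplus -> Dplus -> Dplus)
  (Hstar : triangle_function star) (Hcont : tf_continuous star)
  (Hsup : sup_continuous star) (Hunits : units_trivial star)
  (G : Type) (mul : G -> G -> G) (e : G) (inv : G -> G) (D : G -> G -> Dplus)
  (HG : is_group mul e inv) (HD : is_invariant_pm_group star mul D)
  (HDc : complete D)
  (G' : Type) (mul' : G' -> G' -> G') (e' : G') (inv' : G' -> G') (D' : G' -> G' -> Dplus)
  (HG' : is_group mul' e' inv') (HD' : is_invariant_pm_group star mul' D')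
  (HDc' : complete D') :
  (exists I : G -> G',
      (forall x y, I x = I y -> x = y) /\ (forall x', exists x, I x = x') /\
      (forall x y, I (mul x y) = mul' (I x) (I y)) /\
      (forall x y, D' (I x) (I y) = D x y))
  <->
  (exists Phi : (G -> Dplus) -> (G' -> Dplus),
      (forall f, Lip1 star D f -> Lip1 star D' (Phi f)) /\
      (forall f g, Lip1 star D f -> Lip1 star D g -> Phi f = Phi g -> f = g) /\
      (forall f', Lip1 star D' f' -> exists f, Lip1 star D f /\ Phi f = f') /\
      (forall f g, Lip1 star D f -> Lip1 star D g ->
          Phi (odot star mul f g) = odot star mul' (Phi f) (Phi g)) /\
      (forall f g, Lip1 star D f -> Lip1 star D g ->
          bbDbar star D' (Phi f) (Phi g) = bbDbar star D f g)).
Proof.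
  split.
  - intros [I HI]. exact (isometric_Lip1_isomorphism_of_group_iso star mul D mul' D' I HI).
  - intros [Phi HPhi].
    exact (isometric_isomorphism_of_Lip1_iso Hstar Hcont Hsup HG HD HDc HG' HD' HDc' HPhi).
Qed.
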